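(* Let $k\geq2$ be an integer. Suppose $\mu$ is a constant sum strong Rayleigh measure on $2^{[n]}$ such that $$\mathbb{P}[S:i\in S]=\sum_{S\ni i}\mu(\{S\})\leq\Big(\frac1{\sqrt{k-1}}-\frac1{\sqrt k}\Big)^2$$ for all $1\leq i\leq n$. Then the support of $\mu$ contains $k$ pairwise disjoint sets (i.e. the matroid whose set of bases is the support of $\mu$ has $k$ disjoint bases).
   Context: A discrete probability measure $\mu$ on $2^{[n]}$ has multivariate partition function $P_\mu(\mathbf{x})=\sum_{S\subseteq[n]}\mu(\{S\})\prod_{j\in S}x_j$; $\mu$ is strong Rayleigh if $P_\mu(\mathbf{x})\neq0$ whenever $\operatorname{Im}(x_j)>0$ for all $j$, and of constant sum $d$ if $|S|=d$ whenever $\mu(\{S\})\neq0$. The support of $\mu$ is $\{S:\mu(\{S\})>0\}$; for a constant sum strong Rayleigh measure the support is the set of bases of a matroid on $[n]$. *)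

From HB Require Import structures.
From mathcomp Require Import all_boot all_order all_algebra.
From mathcomp Require Import complex.
From mathcomp Require Import reals.
Set Implicit Arguments. Unset Strict Implicit. Unset Printing Implicit Defensive.
Import Order.TTheory GRing.Theory Num.Theory.
Local Open Scope ring_scope.

Definition prob_measure (R : realType) (n : nat) (mu : {ffun {set 'I_n} -> R}) :=
  (forall S, 0 <= mu S) /\ \sum_(S : {set 'I_n}) mu S = 1.

Definition partition_function (R : realType) (n : nat)
  (mu : {ffun {set 'I_n} -> R}) (x : 'I_n -> R[i]) : R[i] :=
  \sum_(S : {set 'I_n}) real_complex R (mu S) * \prod_(j in S) x j.

Definition strong_rayleigh (R : realType) (n : nat) (mu : {ffun {set 'I_n} -> R}) :=
  forall x : 'I_n -> R[i], (forall j, 0 < complex.Im (x j)) ->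
    partition_function mu x != 0.

Definition constant_sum (R : realType) (n : nat) (mu : {ffun {set 'I_n} -> R}) (d : nat) :=
  forall S, mu S != 0 -> #|S| = d.

Definition mu_support (R : realType) (n : nat) (mu : {ffun {set 'I_n} -> R}) : {set {set 'I_n}} :=
  [set S | 0 < mu S].

(* The support of a constant-sum strong Rayleigh measure mu is the set of
   bases of a matroid: if the exchange axiom failed for B1, B2 and y, integer
   weights can be chosen so that a single pair of support sets dominates
   Im(-P(x_y = 0) * conj(dP/dx_y)) at a scaled point of the upper half plane;
   its coefficient is positive, so for a large scaling the zero of P in x_y
   has positive imaginary part, contradicting stability.
   For the rank function r(A) = max_B |B :&: A|, averaging |S :&: A| + |S :\: A|
   over mu gives d <= r(A) + |~: A| / k, since every marginal is at most
   (1/sqrt(k-1) - 1/sqrt k)^2 <= 1/k.  This is Edmonds' condition for k disjoint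
   bases, obtained from the matroid intersection theorem applied to the union of
   k copies of the matroid and the partition matroid on the copies of each
   element. *)

From HB Require Import structures.
From mathcomp Require Import all_boot all_order all_algebra.
From mathcomp Require Import complex.
From mathcomp Require Import reals.
From mathcomp Require Import ring lra zify.
Import Order.TTheory GRing.Theory Num.Theory.
Set Implicit Arguments. Unset Strict Implicit. Unset Printing Implicit Defensive.

(** * Matroid intersection *)

Section MatroidIntersection.
Variable T : finType.
Implicit Types (r : {set T} -> nat) (A B I U V W X : {set T}) (e : T).

Definition rank_fun r :=
  [/\ r set0 = 0,
      (forall A B, A \subset B -> r A <= r B),
      (forall A e, r (e |: A) <= (r A).+1) &
      (forall A B, r (A :|: B) + r (A :&: B) <= r A + r B)].

Definition contract_rank r e A := r (e |: A) - r [set e].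

Lemma rank_set1_le1 r e : rank_fun r -> r [set e] <= 1.
Proof. by case=> r0 _ rU1 _; have := rU1 set0 e; rewrite setU0 r0. Qed.

Lemma rank_set1_leU1 r e A : rank_fun r -> r [set e] <= r (e |: A).
Proof. by case=> _ rS _ _; apply: rS; rewrite sub1set setU11. Qed.

Lemma rank_setU1_loop r e A : rank_fun r -> r [set e] = 0 -> r (e |: A) = r A.
Proof.
case=> _ rS _ rSM loop; apply/anti_leq/andP; split; last exact/rS/subsetUr.
by have := rSM [set e] A; rewrite loop; lia.
Qed.

Lemma rank_fun_contract r e : rank_fun r -> rank_fun (contract_rank r e).
Proof.
move=> rr; have ge := @rank_set1_leU1 r e _ rr; case: rr => r0 rS rU1 rSM.
split; rewrite /contract_rank.
- by rewrite setU0 subnn.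
- by move=> A B sAB; rewrite leq_sub2r // rS // setUS.
- by move=> A x; have := rU1 (e |: A) x; rewrite setUCA; have := ge A; lia.
- move=> A B; have := rSM (e |: A) (e |: B); rewrite -setUUr -setUIr.
  by have := ge A; have := ge B; have := ge (A :|: B); have := ge (A :&: B); lia.
Qed.

Definition rank_cover_ge r1 r2 X m :=
  forall U, U \subset X -> m <= r1 U + r2 (X :\: U).

Section DeleteContract.
Variables (r1 r2 : {set T} -> nat) (X : {set T}) (m : nat) (e : T).
Hypotheses (rr1 : rank_fun r1) (rr2 : rank_fun r2).
Hypotheses (cover : rank_cover_ge r1 r2 X m) (eX : e \in X).

Let notin_subD1 V : V \subset X :\ e -> e \notin V.
Proof. by move=> sV; apply/negP => /(subsetP sV); rewrite !inE eqxx. Qed.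

Let setU1_setDD1 V : V \subset X :\ e -> e |: ((X :\ e) :\: V) = X :\: V.
Proof.
move=> sV; apply/setP => x; rewrite !inE; case: eqVneq => [->|//].
by rewrite eX (negbTE (notin_subD1 sV)).
Qed.

Lemma rank_cover_nonloop U : U \subset X :\ e ->
  r1 U + r2 ((X :\ e) :\: U) < m -> r1 [set e] = 1 /\ r2 [set e] = 1.
Proof.
move=> sU ltU; have sUX : U \subset X := subset_trans sU (subD1set X e).
split; apply/eqP; rewrite eqn_leq rank_set1_le1 // lt0n; apply/eqP => loop.
- have := @cover (e |: U); rewrite subUset sub1set eX sUX -setDDl => /(_ isT).
  by rewrite rank_setU1_loop //; lia.
- have := @cover U sUX; rewrite -setU1_setDD1 //.
  by rewrite rank_setU1_loop //; lia.
Qed.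

Lemma rank_cover_uncross U W : U \subset X :\ e -> W \subset X :\ e ->
    r1 U + r2 ((X :\ e) :\: U) < m ->
    contract_rank r1 e W + contract_rank r2 e ((X :\ e) :\: W) < m.-1 -> False.
Proof.
move=> sU sW ltU; rewrite /contract_rank setU1_setDD1 // => ltW.
have [eU eW] := (notin_subD1 sU, notin_subD1 sW).
have sUX : U \subset X := subset_trans sU (subD1set X e).
have sWX : W \subset X := subset_trans sW (subD1set X e).
have := @cover (e |: (U :|: W)); rewrite subUset sub1set eX subUset sUX sWX => /(_ isT).
have := @cover (U :&: W) (subset_trans (subsetIl U W) sUX).
case: rr1 => _ _ _ /(_ U (e |: W)); case: rr2 => _ _ _ /(_ ((X :\ e) :\: U) (X :\: W)).
have -> : (X :\ e :\: U) :|: (X :\: W) = X :\: (U :&: W).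
  apply/setP => x; rewrite !inE; case: (eqVneq x e) => [->|_] /=.
    by rewrite (negbTE eU) (negbTE eW) eX; case: (e \in X).
  by case: (x \in U); case: (x \in W); case: (x \in X).
have -> : (X :\ e :\: U) :&: (X :\: W) = X :\: (e |: (U :|: W)).
  apply/setP => x; rewrite !inE.
  by case: (x == e); case: (x \in U); case: (x \in W); case: (x \in X).
rewrite setUCA; have -> : U :&: (e |: W) = U :&: W.
  by apply/setP => x; rewrite !inE; case: eqVneq => [->|_]; rewrite ?(negbTE eU).
have := rank_set1_le1 e rr1; have := rank_set1_le1 e rr2.
have := @rank_set1_leU1 _ e W rr1; have := @rank_set1_leU1 _ e (X :\: W) rr2.
lia.
Qed.

Lemma rank_cover_delete_or_contract :
  rank_cover_ge r1 r2 (X :\ e) m \/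
  [/\ r1 [set e] = 1, r2 [set e] = 1 &
       rank_cover_ge (contract_rank r1 e) (contract_rank r2 e) (X :\ e) m.-1].
Proof.
case: (boolP [exists U : {set T}, (U \subset X :\ e) && (r1 U + r2 ((X :\ e) :\: U) < m)]);
  last first.
  by rewrite negb_exists => /forallP cover'; left => U sU; move: (cover' U); rewrite sU -leqNgt.
case/existsP=> U /andP[sU ltU]; right; have [e1 e2] := rank_cover_nonloop sU ltU.
split=> // W sW; rewrite leqNgt; apply/negP; exact: rank_cover_uncross sU sW ltU.
Qed.
End DeleteContract.

Theorem matroid_intersection r1 r2 X m : rank_fun r1 -> rank_fun r2 ->
  rank_cover_ge r1 r2 X m ->
  exists I, [/\ I \subset X, r1 I = #|I|, r2 I = #|I| & m <= #|I|].
Proof.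
have [N] := ubnP #|X|; elim: N => // N IH in r1 r2 X m *.
move=> ltXN rr1 rr2 cover; case: (posnP m) => [->|m_gt0].
  by exists set0; rewrite sub0set cards0; case: rr1 => -> _ _ _; case: rr2 => -> _ _ _.
have [X0|[e eX]] := set_0Vmem X.
  have := @cover set0; rewrite sub0set setD0 X0.
  by case: rr1 => -> _ _ _; case: rr2 => -> _ _ _; lia.
have ltXeN : #|X :\ e| < N by move: ltXN; rewrite (cardsD1 e X) eX.
have sXeX : X :\ e \subset X := subD1set X e.
case: (rank_cover_delete_or_contract rr1 rr2 cover eX) => [cover'|[e1 e2 cover']].
  have [I [sI]] := IH _ _ _ _ ltXeN rr1 rr2 cover'.
  by exists I; split=> //; apply: subset_trans sI sXeX.
have [I [sI rI1 rI2 leI]] :=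
  IH _ _ _ _ ltXeN (rank_fun_contract e rr1) (rank_fun_contract e rr2) cover'.
have eI : e \notin I by apply/negP => /(subsetP sI); rewrite !inE eqxx.
exists (e |: I); rewrite cardsU1 eI subUset sub1set eX (subset_trans sI sXeX).
move: rI1 rI2; rewrite /contract_rank.
have := @rank_set1_leU1 _ e I rr1; have := @rank_set1_leU1 _ e I rr2.
split=> //; lia.
Qed.
End MatroidIntersection.

(** * Rank of a family of bases *)

Section BasisRank.
Variable T : finType.
Implicit Types (A B X Y Z : {set T}) (F : {set {set T}}).

Definition basis_exchange F := forall B1 B2 y, B1 \in F -> B2 \in F ->
  y \notin B1 -> y \in B2 -> exists2 x, x \in B1 :\: B2 & y |: (B1 :\ x) \in F.

Definition basis_rank F A := \max_(B in F) #|B :&: A|.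

Lemma card_exchangeI B Z x y : x \in B -> y \notin B ->
  #|(y |: (B :\ x)) :&: Z| + (x \in Z) = #|B :&: Z| + (y \in Z).
Proof.
move=> xB yB; rewrite (cardsD1 x (B :&: Z)) (cardsD1 y ((y |: (B :\ x)) :&: Z)).
have -> : (y |: (B :\ x)) :&: Z :\ y = B :&: Z :\ x.
  apply/setP => z; rewrite !inE; case: (eqVneq z y) => [->|_] /=.
    by rewrite (negbTE yB) !andbF.
  by case: eqVneq.
by rewrite !inE xB eqxx /=; lia.
Qed.

Lemma basis_rank_ge F B A : B \in F -> #|B :&: A| <= basis_rank F A.
Proof. exact: (@leq_bigmax_cond _ (mem F)). Qed.

Lemma basis_rank_le_card F A : basis_rank F A <= #|A|.
Proof. by apply/bigmax_leqP => B _; rewrite subset_leq_card ?subsetIr. Qed.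

Variable F : {set {set T}}.
Hypotheses (F_neq0 : F != set0) (exF : basis_exchange F).

Lemma basis_rank_attained A : exists2 B, B \in F & #|B :&: A| = basis_rank F A.
Proof.
have F_gt0 : 0 < #|F| by rewrite card_gt0.
by rewrite /basis_rank; have [B BF ->] := eq_bigmax_cond (fun B => #|B :&: A|) F_gt0; exists B.
Qed.

Lemma basis_rank_augment B Y : B \in F -> #|B :&: Y| < basis_rank F Y ->
  exists x y, [/\ x \in B :\: Y, y \in Y :\: B & y |: (B :\ x) \in F].
Proof.
move=> BF ltBY; have [Bw BwF eBw] := basis_rank_attained Y.
pose P B2 := (B2 \in F) && (#|B2 :&: Y| == basis_rank F Y).
have PBw : P Bw by rewrite /P BwF eBw eqxx.
case: (arg_maxnP (fun B2 => #|B2 :&: B|) PBw) => B2 /andP[B2F /eqP eB2] B2max.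
have sBYB2 : B :&: Y \subset B2 :&: Y.
  apply/subsetP => x; rewrite !inE => /andP[xB xY]; rewrite xY andbT.
  apply/negPn/negP => xB2.
  have [x' /setDP[x'B2 x'B] B2'F] := exF B2F BF xB2 xB.
  have := card_exchangeI B x'B2 xB2; rewrite (negbTE x'B) xB addn0 addn1 => exB.
  suff /B2max : P (x |: (B2 :\ x')) by rewrite /= exB ltnn.
  rewrite /P B2'F eqn_leq basis_rank_ge //= -eB2 -ltnS.
  have := card_exchangeI Y x'B2 xB2; rewrite xY addn1 => <-.
  by rewrite -addn1 leq_add2l leq_b1.
have /properP[_ [y /setIP[yB2 yY] yBY]] : B :&: Y \proper B2 :&: Y.
  by rewrite properEcard sBYB2 eB2.
have yB : y \notin B by apply: contra yBY => yB; rewrite inE yB.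
have [x /setDP[xB xB2] B'F] := exF BF B2F yB yB2.
have xY : x \notin Y.
  apply: contra xB2 => xY.
  by apply: (subsetP (subset_trans sBYB2 (subsetIl _ _))); rewrite inE xB.
by exists x, y; rewrite !inE xB xY yY yB B'F.
Qed.

Lemma basis_rank_chain X Y : X \subset Y -> exists2 B, B \in F &
  #|B :&: X| = basis_rank F X /\ #|B :&: Y| = basis_rank F Y.
Proof.
move=> sXY; have [B0 B0F eB0] := basis_rank_attained X.
pose P B := (B \in F) && (#|B :&: X| == basis_rank F X).
have PB0 : P B0 by rewrite /P B0F eB0 eqxx.
case: (arg_maxnP (fun B => #|B :&: Y|) PB0) => B /andP[BF /eqP eBX] Bmax.
exists B => //; split=> //; apply/eqP; rewrite eqn_leq basis_rank_ge //=.
rewrite leqNgt; apply/negP => /(basis_rank_augment BF)[x [y [/setDP[xB xY]]]].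
move=> /setDP[yY yB] B'F; have xX : x \notin X := contra (subsetP sXY x) xY.
have := card_exchangeI X xB yB; have := card_exchangeI Y xB yB.
rewrite (negbTE xX) (negbTE xY) yY !addn0 addn1 => exY exX.
suff /Bmax : P (y |: (B :\ x)) by rewrite /= exY ltnn.
by rewrite /P B'F eqn_leq basis_rank_ge //= -eBX exX leq_addr.
Qed.

Lemma rank_fun_basis_rank : rank_fun (basis_rank F).
Proof.
split.
- by apply/eqP; rewrite -leqn0; apply/bigmax_leqP => B _; rewrite setI0 cards0.
- move=> A C sAC; apply/bigmax_leqP => B BF; apply: leq_trans (basis_rank_ge C BF).
  by rewrite subset_leq_card // setIS.
- move=> A x; apply/bigmax_leqP => B BF; have := basis_rank_ge A BF.
  rewrite setIUr cardsU; have : #|B :&: [set x]| <= 1.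
    by rewrite -(cards1 x) subset_leq_card ?subsetIr.
  lia.
- move=> A C; have [B BF [<- <-]] := basis_rank_chain (subset_trans (subsetIl A C) (subsetUl A C)).
  rewrite addnC setIIr setIUr addnC cardsUI.
  by rewrite leq_add ?basis_rank_ge.
Qed.

Variable d : nat.
Hypothesis F_card : forall B, B \in F -> #|B| = d.

Lemma basis_rank_le_size A : basis_rank F A <= d.
Proof. by apply/bigmax_leqP => B BF; rewrite -(F_card BF) subset_leq_card ?subsetIl. Qed.

Lemma basis_of_full_rank A : basis_rank F A = #|A| -> #|A| = d -> A \in F.
Proof.
move=> rA dA; have [B BF eB] := basis_rank_attained A.
have sAB : A \subset B.
  by apply/setIidPr/eqP; rewrite eqEcard subsetIr eB rA leqnn.
suff -> : A = B by [].
by apply/eqP; rewrite eqEcard sAB (F_card BF) dA leqnn.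
Qed.
End BasisRank.

(** * Base packing *)

Lemma eq_of_sum_leq (I : finType) (f g : I -> nat) :
  (forall i, f i <= g i) -> \sum_i g i <= \sum_i f i -> forall i, f i = g i.
Proof.
move=> le_fg le_gf i; have [le_sum] := leqif_sum (fun i (_ : true) => leqif_eq (le_fg i)).
rewrite eqn_leq le_sum le_gf => /esym/forall_inP/(_ i isT).
by move/eqP.
Qed.

Lemma rank_fun_card_imset (aT rT : finType) (f : aT -> rT) :
  rank_fun (fun A : {set aT} => #|f @: A|).
Proof.
split.
- by rewrite imset0 cards0.
- by move=> A B sAB; rewrite subset_leq_card ?imsetS.
- by move=> A x; rewrite imsetU1 cardsU1; case: (_ \notin _).
- move=> A B; rewrite imsetU -[X in _ <= X]cardsUI leq_add2l subset_leq_card //.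
  by apply/subsetP => _ /imsetP[u /setIP[uA uB] ->]; rewrite inE !imset_f.
Qed.

Section Slices.
Variables (T : finType) (k : nat).
Implicit Types (U V : {set 'I_k * T}).

Definition slice U (a : 'I_k) : {set T} := [set x | (a, x) \in U].

Lemma card_slices U : #|U| = \sum_(a < k) #|slice U a|.
Proof.
rewrite -sum1_card big_mkcond /=.
rewrite (eq_bigr (fun a => \sum_x if (a, x) \in U then 1 else 0)); last first.
  by move=> a _; rewrite -sum1_card big_mkcond; apply: eq_bigr => x _; rewrite inE.
by rewrite pair_bigA; apply: eq_bigr => -[a x].
Qed.

Lemma rank_fun_sum_slices r :
  rank_fun r -> rank_fun (fun U => \sum_(a < k) r (slice U a)).
Proof.
have sliceU U V a : slice (U :|: V) a = slice U a :|: slice V a.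
  by apply/setP => x; rewrite !inE.
have sliceI U V a : slice (U :&: V) a = slice U a :&: slice V a.
  by apply/setP => x; rewrite !inE.
case=> r0 rS rU1 rSM; split.
- by apply: big1 => a _; rewrite -[RHS]r0; congr r; apply/setP => x; rewrite !inE.
- by move=> U V sUV; apply: leq_sum => a _; apply/rS/subsetP => x; rewrite !inE => /(subsetP sUV).
- move=> U [a0 x0]; rewrite (bigD1 a0) // [X in _ <= X.+1](bigD1 a0) //= -addSn leq_add //.
    have -> : slice ((a0, x0) |: U) a0 = x0 |: slice U a0.
      by apply/setP => x; rewrite !inE xpair_eqE eqxx.
    exact: rU1.
  rewrite leq_eqVlt; apply/orP; left; apply/eqP/eq_bigr => a na; congr r.
  by apply/setP => x; rewrite !inE xpair_eqE (negbTE na).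
- by move=> U V; rewrite -!big_split leq_sum // => a _; rewrite sliceU sliceI.
Qed.
End Slices.

Theorem base_packing (T : finType) (F : {set {set T}}) (d k : nat) :
    F != set0 -> basis_exchange F -> (forall B, B \in F -> #|B| = d) ->
    (forall A, k * d <= k * basis_rank F A + #|~: A|) ->
  exists Bs : 'I_k -> {set T},
    (forall a, Bs a \in F) /\ (forall a b, a != b -> [disjoint Bs a & Bs b]).
Proof.
move=> F_neq0 exF F_card bound.
(* r1 is the rank of the union of k copies of the matroid and r2 that of the
   partition matroid on the copies of each element: a common independent set
   of size k * d splits into k disjoint bases. *)
pose r1 U := \sum_(a < k) basis_rank F (@slice T k U a).
pose r2 (U : {set 'I_k * T}) := #|snd @: U|.
have cover : rank_cover_ge r1 r2 setT (k * d).
  move=> U _; pose A := [set x | [forall a, (a, x) \in U]].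
  apply: leq_trans (bound A) _; apply: leq_add.
    rewrite -[k in k * _]card_ord -sum_nat_const; apply: leq_sum => a _.
    have [_ rS _ _] := rank_fun_basis_rank F_neq0 exF; apply: rS.
    by apply/subsetP => x; rewrite !inE => /forallP/(_ a).
  apply: subset_leq_card; apply/subsetP => x; rewrite !inE negb_forall => /existsP[a aU].
  by apply/imsetP; exists (a, x); rewrite // !inE aU.
have [I [_ rI1 rI2 leI]] := matroid_intersection
  (rank_fun_sum_slices k (rank_fun_basis_rank F_neq0 exF)) (rank_fun_card_imset snd) cover.
have indep : forall a, basis_rank F (slice I a) = #|slice I a|.
  by apply: eq_of_sum_leq => [a|]; rewrite ?basis_rank_le_card // -card_slices -rI1.
have card_d : forall a, #|slice I a| = d.
  apply: (@eq_of_sum_leq _ _ (fun=> d)) => [a|].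
    by rewrite -indep (basis_rank_le_size F_card).
  by rewrite -card_slices sum_nat_const card_ord.
exists (slice I); split=> [a|a b ab].
  by apply: (basis_of_full_rank F_neq0 F_card (indep a)); apply: card_d.
have /imset_injP inj : #|snd @: I| == #|I| by rewrite -rI2.
rewrite -setI_eq0; apply/eqP/setP => x; rewrite !inE; apply/negP => /andP[aI bI].
by move: (inj _ _ aI bI erefl) ab => [->]; rewrite eqxx.
Qed.

(** * Strong Rayleigh measures and basis exchange *)

Section LexWeights.
Variable T : finType.
Implicit Types (g : T -> nat) (A B X Y Z : {set T}).

Lemma sum_mem_card Z X : \sum_(e in X) (e \in Z) = #|X :&: Z|.
Proof.
rewrite -sum1_card big_mkcond [RHS]big_mkcond /=; apply: eq_bigr => e _.
by rewrite inE; case: (e \in X); case: (e \in Z).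
Qed.

Lemma sum_lex_weight g Z X :
  \sum_(e in X) (#|T|.+1 * g e + (e \in Z)) = #|T|.+1 * \sum_(e in X) g e + #|X :&: Z|.
Proof. by rewrite big_split /= -big_distrr sum_mem_card. Qed.

Lemma lex_ltn a a' b b' : b <= #|T| -> a < a' -> #|T|.+1 * a + b < #|T|.+1 * a' + b'.
Proof. by move=> le_b lt_a; have := leq_mul (leqnn #|T|.+1) lt_a; lia. Qed.

Lemma card_setI_lt X Y : #|X| = #|Y| -> X != Y -> #|X :&: Y| < #|Y|.
Proof.
move=> eXY nXY; rewrite ltn_neqAle subset_leq_card ?subsetIr // andbT.
apply: contra nXY => /eqP eI; have sYX : Y \subset X.
  by apply/setIidPr/eqP; rewrite eqEcard subsetIr eI leqnn.
by rewrite eq_sym eqEcard sYX eXY leqnn.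
Qed.

Lemma card_setD_sub_or_two A B : #|A| = #|B|.+1 ->
  (exists2 x, x \in A & B = A :\ x) \/
  exists a b, [/\ a != b, a \in A :\: B & b \in A :\: B].
Proof.
move=> cardA; have cardD : #|A :\: B| = #|B :\: A|.+1.
  by move: (cardsID B A) (cardsID A B); rewrite setIC; lia.
have [BA0|[z zBA]] := set_0Vmem (B :\: A); last first.
  have [a aD] : exists a, a \in A :\: B by apply/card_gt0P; rewrite cardD.
  have [b bD] : exists b, b \in (A :\: B) :\ a.
    apply/card_gt0P; move: cardD.
    by rewrite (cardsD1 a (A :\: B)) aD (cardsD1 z (B :\: A)) zBA; lia.
  by right; exists a, b; move: bD; rewrite in_setD1 eq_sym => /andP[-> ->].
left; move: cardD; rewrite BA0 cards0 => /eqP/cards1P[x ADx].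
have sBA : B \subset A by rewrite -setD_eq0 BA0.
exists x; first by have := set11 x; rewrite -ADx => /setDP[].
by rewrite -ADx setDDr setDv set0U; apply/esym/setIidPr.
Qed.
End LexWeights.

Local Open Scope ring_scope.

Lemma dominant_term_pos (R : realFieldType) (I : finType) (P : pred I)
    (c : I -> R) (m : I -> nat) (i0 : I) :
    P i0 -> 0 < c i0 -> (forall i, P i -> i != i0 -> c i != 0 -> (m i < m i0)%N) ->
  exists2 t : R, 0 < t & 0 < \sum_(i | P i) c i * t ^+ m i.
Proof.
move=> Pi0 c0_gt0 dom; set L := \sum_(i | P i && (i != i0)) `|c i|.
have L_ge0 : 0 <= L by rewrite sumr_ge0.
pose t := 1 + L / c i0; have t_ge1 : 1 <= t by rewrite /t lerDl divr_ge0 // ltW.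
have t_gt0 : 0 < t := lt_le_trans ltr01 t_ge1.
exists t => //; rewrite (bigD1 i0) //=; case E: (m i0) => [|m0].
  rewrite big1 ?addr0 ?expr0 ?mulr1 // => i /andP[Pi ni].
  by have [->|/(dom i Pi ni)] := eqVneq (c i) 0; rewrite ?mul0r // E.
have low : - (L * t ^+ m0) <= \sum_(i | P i && (i != i0)) c i * t ^+ m i.
  rewrite /L mulr_suml -sumrN; apply: ler_sum => i /andP[Pi ni].
  have [->|/(dom i Pi ni)] := eqVneq (c i) 0; first by rewrite normr0 !mul0r oppr0.
  rewrite E ltnS => le_m; rewrite -mulNr; apply: le_trans (_ : - `|c i| * t ^+ m i <= _).
    by rewrite ler_wnM2l ?oppr_le0 // ler_weXn2l.
  by apply: ler_wpM2r; [rewrite exprn_ge0 // ltW | exact: lerNnormlW].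
have top : c i0 * t ^+ m0.+1 = (c i0 + L) * t ^+ m0.
  by rewrite exprS mulrA mulrDr mulr1 mulrCA divff ?mulr1 // gt_eqF.
have : 0 < c i0 * t ^+ m0 by rewrite mulr_gt0 ?exprn_gt0.
by move: low; rewrite top mulrDl; lra.
Qed.

Section ComplexPartitionFunction.
Local Open Scope complex_scope.

Lemma Im_realM (R : realType) (r : R) (z : R[i]) : complex.Im (r%:C * z) = r * complex.Im z.
Proof. by case: z => a b /=; simpc. Qed.

Lemma conjc_realM (R : realType) (r : R) (z : R[i]) : conjc (r%:C * z) = r%:C * conjc z.
Proof. by case: z => a b; simpc. Qed.

Lemma ImD (R : realType) (u v : R[i]) : complex.Im (u + v) = complex.Im u + complex.Im v.
Proof. by case: u; case: v. Qed.

Lemma Im_div (R : realType) (u v : R[i]) : v != 0 ->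
  complex.Im (u / v) = complex.Im (u * conjc v) / (complex.Re v ^+ 2 + complex.Im v ^+ 2).
Proof.
case: v => a b; case: u => c d /= v_neq0.
have : a ^+ 2 + b ^+ 2 != 0.
  apply: contra v_neq0; rewrite paddr_eq0 ?sqr_ge0 // !sqrf_eq0 => /andP[/eqP-> /eqP->].
  by [].
by move=> ab_neq0; simpc; rewrite /=; field.
Qed.

Section PartitionFunctionAffine.
Variables (R : realType) (n : nat) (mu : {ffun {set 'I_n} -> R}) (y : 'I_n).
Implicit Types (z : 'I_n -> R[i]) (S : {set 'I_n}).

Definition pf_deriv z := \sum_(S : {set 'I_n} | y \in S) (mu S)%:C * \prod_(e in S :\ y) z e.
Definition pf_at0 z := \sum_(S : {set 'I_n} | y \notin S) (mu S)%:C * \prod_(e in S) z e.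

Lemma partition_function_affine z xi :
  partition_function mu (fun e => if e == y then xi else z e) = xi * pf_deriv z + pf_at0 z.
Proof.
rewrite /partition_function (bigID (fun S : {set 'I_n} => y \in S)) /=; congr (_ + _).
  rewrite /pf_deriv mulr_sumr; apply: eq_bigr => S yS.
  rewrite (big_setD1 y yS) /= eqxx mulrCA; congr (_ * (_ * _)).
  by apply: eq_bigr => e /setD1P[/negbTE-> _].
apply: eq_bigr => S yS; congr (_ * _); apply: eq_bigr => e eS.
by case: eqP => // ey; rewrite -ey eS in yS.
Qed.

Lemma strong_rayleigh_cross_le0 z : strong_rayleigh mu ->
  (forall e, 0 < complex.Im (z e)) -> complex.Im (- pf_at0 z * conjc (pf_deriv z)) <= 0.
Proof.
move=> SR Im_z_gt0; rewrite leNgt; apply/negP => cross_gt0.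
have A_neq0 : pf_deriv z != 0.
  by apply: contraTneq cross_gt0 => ->; rewrite rmorph0 mulr0 ltxx.
(* xi is the zero of P in the variable x_y; Im xi has the sign of the
   cross term. *)
pose xi := - pf_at0 z / pf_deriv z.
have /SR : forall e, 0 < complex.Im (if e == y then xi else z e).
  move=> e; case: eqP => // _; rewrite Im_div // divr_gt0 // lt_def.
  rewrite addr_ge0 ?sqr_ge0 // andbT; move: A_neq0; apply: contra.
  case: (pf_deriv z) => a b /=; rewrite paddr_eq0 ?sqr_ge0 // !sqrf_eq0.
  by case/andP=> /eqP-> /eqP->.
by rewrite partition_function_affine divfK // addNr eqxx.
Qed.
End PartitionFunctionAffine.

Section DominantCross.
Variables (R : realType) (n : nat) (mu : {ffun {set 'I_n} -> R}) (y : 'I_n).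
Variables (zeta : 'I_n -> R[i]) (w : 'I_n -> nat).

Definition weight (X : {set 'I_n}) := (\sum_(e in X) w e)%N.

Definition cross_coef (S T : {set 'I_n}) :=
  complex.Im (- \prod_(e in T) zeta e * conjc (\prod_(e in S :\ y) zeta e)).

Let scaled (t : R) e := (t ^+ w e)%:C * zeta e.

Let prod_scaled t (X : {set 'I_n}) :
  \prod_(e in X) scaled t e = (t ^+ weight X)%:C * \prod_(e in X) zeta e.
Proof.
rewrite big_split /= -rmorph_prod; congr (_%:C * _).
by rewrite /weight (big_morph (fun m => t ^+ m) (exprD t) (expr0 t)).
Qed.

Lemma cross_expand t :
  complex.Im (- pf_at0 mu y (scaled t) * conjc (pf_deriv mu y (scaled t))) =
  \sum_(p : {set 'I_n} * {set 'I_n} | (y \in p.1) && (y \notin p.2))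
     mu p.1 * mu p.2 * cross_coef p.1 p.2 * t ^+ (weight (p.1 :\ y) + weight p.2).
Proof.
rewrite /pf_deriv /pf_at0 rmorph_sum mulNr mulr_sumr -sumrN.
under eq_bigr => S _ do rewrite mulr_suml -sumrN.
rewrite pair_big /= (big_morph _ (@ImD R) (erefl : complex.Im (0 : R[i]) = 0)).
apply: eq_bigr => -[S T] /= _; rewrite !prod_scaled !conjc_realM.
set PT := \prod_(e in T) zeta e; set PS := \prod_(e in S :\ y) zeta e.
rewrite (_ : - _ = (mu S * mu T * t ^+ (weight (S :\ y) + weight T))%:C * - (PT * conjc PS)).
  by rewrite Im_realM /cross_coef -/PT -/PS mulNr; ring.
by rewrite exprD !rmorphM /=; ring.
Qed.

Hypotheses (SR : strong_rayleigh mu) (mu_ge0 : forall S, 0 <= mu S).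
Hypothesis Im_zeta_gt0 : forall e, 0 < complex.Im (zeta e).

Lemma strong_rayleigh_dominant_cross_le0 (Ss Ts : {set 'I_n}) :
    y \in Ss -> y \notin Ts -> 0 < mu Ss -> 0 < mu Ts ->
    (forall S, 0 < mu S -> y \in S -> S != Ss -> (weight (S :\ y) < weight (Ss :\ y))%N) ->
    (forall T, 0 < mu T -> y \notin T -> T != Ts -> (weight T < weight Ts)%N) ->
  cross_coef Ss Ts <= 0.
Proof.
move=> ySs yTs mu_Ss mu_Ts domS domT; rewrite leNgt; apply/negP => cross_gt0.
have mu_gt0 S : mu S != 0 -> 0 < mu S by move=> nz; rewrite lt_def nz mu_ge0.
pose P (p : {set 'I_n} * {set 'I_n}) := (y \in p.1) && (y \notin p.2).
pose c p := mu p.1 * mu p.2 * cross_coef p.1 p.2.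
pose m p := (weight (p.1 :\ y) + weight p.2)%N.
have dom p : P p -> p != (Ss, Ts) -> c p != 0 -> (m p < m (Ss, Ts))%N.
  case: p => S T /andP[/= yS yT] neq; rewrite /c /m /= !mulf_eq0 !negb_or.
  case/andP=> /andP[/mu_gt0 muS /mu_gt0 muT] _.
  have [eS|nS] := eqVneq S Ss; have [eT|nT] := eqVneq T Ts.
  - by move: neq; rewrite eS eT eqxx.
  - by rewrite eS ltn_add2l domT.
  - by rewrite eT ltn_add2r domS.
  - by rewrite -addnS; apply: leq_add; [apply: ltnW; apply: domS | apply: domT].
have P0 : P (Ss, Ts) by rewrite /P /= ySs yTs.
have c0 : 0 < c (Ss, Ts) by rewrite /c /= !mulr_gt0.
have [t t_gt0] := dominant_term_pos P0 c0 dom.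
rewrite -cross_expand ltNge strong_rayleigh_cross_le0 // => e.
by rewrite Im_realM mulr_gt0 ?exprn_gt0.
Qed.
End DominantCross.

Section TwoMarked.
Variables (R : realType) (n : nat) (y a b : 'I_n).

Definition marked e : R[i] := if (e == a) || (e == b) then 2 +i* 1 else 'i.

Lemma Im_marked_gt0 e : 0 < complex.Im (marked e).
Proof. by rewrite /marked; case: (_ || _). Qed.

Lemma cross_coef_marked (Ss Ts : {set 'I_n}) :
    a != b -> a \in Ts -> b \in Ts -> a \notin Ss -> b \notin Ss ->
    #|Ts| = #|Ss :\ y|.+1 ->
  cross_coef y marked Ss Ts = 3.
Proof.
move=> ab aT bT aS bS cardT; have bTa : b \in Ts :\ a by rewrite !inE eq_sym ab.
have [m cardS] : exists m, #|Ss :\ y| = m.+1.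
  exists #|Ss :\ y|.-1; move: cardT.
  by rewrite (cardsD1 a Ts) aT (cardsD1 b (Ts :\ a)) bTa; lia.
have prodT : \prod_(e in Ts) marked e = (2 +i* 1) ^+ 2 * 'i ^+ m.
  rewrite (big_setD1 a aT) (big_setD1 b bTa) /marked !eqxx orbT /= mulrA -expr2.
  rewrite (eq_bigr (fun _ => 'i)) ?prodr_const; last first.
    by move=> e /setD1P[eb /setD1P[ea _]]; rewrite (negbTE ea) (negbTE eb).
  congr (_ * _ ^+ _); move: cardT.
  by rewrite (cardsD1 a Ts) aT (cardsD1 b (Ts :\ a)) bTa cardS; lia.
have prodS : \prod_(e in Ss :\ y) marked e = 'i ^+ m.+1.
  rewrite (eq_bigr (fun _ => 'i)) ?prodr_const ?cardS // => e /setD1P[_ eS].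
  rewrite /marked; case: eqP => [ea|_]; first by rewrite -ea eS in aS.
  by case: eqP => // eb; rewrite -eb eS in bS.
have conj_iX k : conjc ('i ^+ k) = (- 'i) ^+ k :> R[i].
  by rewrite rmorphXn; congr (_ ^+ _); apply/eqP; rewrite eq_complex /= oppr0 !eqxx.
rewrite /cross_coef prodT prodS conj_iX [(- 'i) ^+ _]exprSr.
have -> : - ((2 +i* 1) ^+ 2 * 'i ^+ m) * ((- 'i) ^+ m * - 'i) =
          - ((2 +i* 1) ^+ 2 * - 'i * ('i * - 'i) ^+ m) :> R[i].
  by rewrite exprMn; ring.
have -> : 'i * - 'i = 1 :> R[i] by rewrite mulrN -expr2 sqr_i opprK.
(* - (2 + i)^2 * (- i) = -4 + 3i *)
rewrite expr1n mulr1.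
by simpc; rewrite /=; lra.
Qed.
End TwoMarked.
End ComplexPartitionFunction.

Section SupportExchange.
Variables (R : realType) (n : nat) (mu : {ffun {set 'I_n} -> R}) (d : nat).
Hypotheses (mu_ge0 : forall S, 0 <= mu S) (SR : strong_rayleigh mu).
Hypothesis mu_cs : constant_sum mu d.

Let card_supp S : 0 < mu S -> #|S| = d.
Proof. by move=> mu_S; apply: mu_cs; rewrite gt_eqF. Qed.

Section Witness.
Variables (B1 B2 : {set 'I_n}) (y : 'I_n).
Hypotheses (mu_B1 : 0 < mu B1) (mu_B2 : 0 < mu B2) (yB1 : y \notin B1) (yB2 : y \in B2).

Let M := #|'I_n|.+1.
Let C := B1 :&: B2.
Let g e := (M * (e \in C) + (e \in B1))%N.
Let P S := (0 < mu S) && (y \in S).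
Let Ss := [arg max_(S > B2 | P S) weight g (S :\ y)].
(* g rewards C first and B1 second, which makes B1 the unique heaviest
   support set avoiding y; the last digit of w does the same for Ss among the
   support sets containing y. *)
Let w e := (M * g e + (e \in Ss :\ y))%N.

Let weight_g X : weight g X = (M * #|X :&: C| + #|X :&: B1|)%N.
Proof. by rewrite /weight sum_lex_weight sum_mem_card. Qed.

Let weight_w X : weight w X = (M * weight g X + #|X :&: (Ss :\ y)|)%N.
Proof. exact: sum_lex_weight. Qed.

Let Ss_max : [/\ 0 < mu Ss, y \in Ss &
  forall S, P S -> (weight g (S :\ y) <= weight g (Ss :\ y))%N].
Proof.
rewrite /Ss; case: arg_maxnP; first by rewrite /P mu_B2 yB2.
by move=> S /andP[mu_S yS] max_S; split.
Qed.

Let card_Ss : #|Ss :\ y| = d.-1.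
Proof.
by have [mu_Ss ySs _] := Ss_max; move: (card_supp mu_Ss); rewrite (cardsD1 y Ss) ySs => <-.
Qed.

Let domT T : 0 < mu T -> y \notin T -> T != B1 -> (weight w T < weight w B1)%N.
Proof.
move=> mu_T yT nTB1; rewrite !weight_w; apply: lex_ltn; first exact: max_card.
have le_C : (#|T :&: C| <= #|B1 :&: C|)%N.
  by rewrite (setIidPr (subsetIl B1 B2)) subset_leq_card ?subsetIr.
have lt_B1 : (#|T :&: B1| < #|B1 :&: B1|)%N.
  by rewrite setIid card_setI_lt // !card_supp.
by rewrite !weight_g; have := leq_mul (leqnn M) le_C; lia.
Qed.

Let domS S : 0 < mu S -> y \in S -> S != Ss -> (weight w (S :\ y) < weight w (Ss :\ y))%N.
Proof.
move=> mu_S yS nS; have [_ ySs max_Ss] := Ss_max; rewrite !weight_w.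
have /max_Ss : P S by rewrite /P mu_S yS.
rewrite leq_eqVlt => /orP[/eqP->|lt_g]; last by apply: lex_ltn => //; exact: max_card.
rewrite ltn_add2l setIid card_setI_lt //.
  by rewrite card_Ss; move: (card_supp mu_S); rewrite (cardsD1 y S) yS => <-.
by apply: contra nS => /eqP eSs; rewrite -(setD1K yS) eSs setD1K.
Qed.

Let C_sub : C \subset Ss :\ y.
Proof.
have [_ _ /(_ B2)] := Ss_max; rewrite /P mu_B2 yB2 !weight_g => /(_ isT).
have -> : (B2 :\ y) :&: C = C.
  apply/setIidPr/subsetP => e /setIP[eB1 eB2]; rewrite !inE eB2 andbT.
  by apply: contraNneq yB1 => <-.
rewrite leqNgt => not_lt; apply/setIidPr/eqP.
rewrite eqEcard subsetIr leqNgt; apply: contra not_lt => lt_C.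
by apply: lex_ltn => //; exact: max_card.
Qed.

Lemma support_exchange_witness :
  exists2 x, x \in B1 :\: B2 & 0 < mu (y |: (B1 :\ x)).
Proof.
have [mu_Ss ySs _] := Ss_max.
have notin_Ss e : e \in B1 -> e \notin Ss :\ y -> e \notin Ss.
  by move=> eB1; rewrite in_setD1; apply: contra => ->; rewrite andbT; apply: contraTneq eB1 => ->.
have cardB1 : #|B1| = #|Ss :\ y|.+1.
  have d_gt0 : (0 < d)%N by rewrite -(card_supp mu_Ss); apply/card_gt0P; exists y.
  by rewrite card_Ss card_supp // prednK.
case: (card_setD_sub_or_two cardB1) => [[x xB1 eSs]|[a [b [ab]]]].
  exists x; last by rewrite -eSs setD1K.
  rewrite inE xB1 andbT; apply/negP => xB2.
  have /(subsetP C_sub) : x \in C by rewrite inE xB1.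
  by rewrite eSs !inE eqxx.
move=> /setDP[aB1 /(notin_Ss a aB1) aSs] /setDP[bB1 /(notin_Ss b bB1) bSs].
have := strong_rayleigh_dominant_cross_le0 SR mu_ge0 (@Im_marked_gt0 R n a b)
  ySs yB1 mu_Ss mu_B1 domS domT.
by rewrite (cross_coef_marked _ ab) //; lra.
Qed.
End Witness.

Lemma strong_rayleigh_exchange : basis_exchange (mu_support mu).
Proof.
move=> B1 B2 y; rewrite !inE => mu_B1 mu_B2 yB1 yB2.
by have [x xD mu_x] := support_exchange_witness mu_B1 mu_B2 yB1 yB2; exists x; rewrite // inE.
Qed.
End SupportExchange.

(** * Marginals *)

Lemma sqr_inv_sqrt_gap_le (R : rcfType) (k : nat) : (2 <= k)%N ->
  (1 / Num.sqrt (k.-1)%:R - 1 / Num.sqrt k%:R) ^+ 2 <= 1 / k%:R :> R.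
Proof.
move=> k_ge2; set a : R := Num.sqrt (k.-1)%:R; set b : R := Num.sqrt k%:R.
have a_gt0 : 0 < a by rewrite sqrtr_gt0 ltr0n; lia.
have b_gt0 : 0 < b by rewrite sqrtr_gt0 ltr0n; lia.
have sqr_le (x y : R) : 0 <= x -> 0 <= y -> (x ^+ 2 <= y ^+ 2) = (x <= y).
  by move=> x_ge0 y_ge0; rewrite ler_sqr ?nnegrE.
have a2 : a ^+ 2 = (k.-1)%:R by rewrite sqr_sqrtr ?ler0n.
have b2 : b ^+ 2 = k%:R by rewrite sqr_sqrtr ?ler0n.
have [a_ge0 b_ge0] := (ltW a_gt0, ltW b_gt0).
have le_ab : a <= b by rewrite -sqr_le // a2 b2 ler_nat; lia.
have le_b2a : b <= 2 * a.
  by rewrite -sqr_le ?mulr_ge0 // exprMn a2 b2 -natrX -natrM ler_nat; lia.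
have gap_ge0 : 0 <= 1 / a - 1 / b by rewrite subr_ge0 !div1r lef_pV2 ?posrE.
have gap_le : 1 / a - 1 / b <= 1 / b.
  rewrite -subr_ge0 (_ : _ - _ = (2 * a - b) / (a * b)); last by field; rewrite ?gt_eqF.
  by rewrite divr_ge0 ?subr_ge0 // mulr_ge0.
have -> : 1 / k%:R = (1 / b) ^+ 2 :> R by rewrite expr_div_n expr1n b2.
by rewrite sqr_le // divr_ge0.
Qed.

Section ExpectedIntersection.
Variables (R : realType) (n : nat) (mu : {ffun {set 'I_n} -> R}).

Lemma expected_cardD (A : {set 'I_n}) :
  \sum_S mu S * #|S :\: A|%:R = \sum_(x in ~: A) \sum_(S : {set 'I_n} | x \in S) mu S.
Proof.
under eq_bigr => S _ do rewrite -sum1_card natr_sum mulr_sumr big_mkcond /=.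
rewrite exchange_big [RHS]big_mkcond; apply: eq_bigr => x _; rewrite [in RHS]big_mkcond.
rewrite inE; case: (boolP (x \in A)) => xA /=.
  by rewrite big1 // => S _; rewrite !inE xA.
by apply: eq_bigr => S _; rewrite !inE xA /=; case: (x \in S); rewrite ?mulr1.
Qed.

Variable d : nat.
Hypotheses (mu_prob : prob_measure mu) (mu_cs : constant_sum mu d).

Lemma expected_card : \sum_S mu S * #|S|%:R = d%:R.
Proof.
have [_ mu1] := mu_prob.
have -> : d%:R = \sum_S mu S * d%:R :> R by rewrite -mulr_suml mu1 mul1r.
apply: eq_bigr => S _.
by have [->|/mu_cs ->] := eqVneq (mu S) 0; rewrite ?mul0r.
Qed.

Lemma expected_cardI_le (A : {set 'I_n}) :
  \sum_S mu S * #|S :&: A|%:R <= (basis_rank (mu_support mu) A)%:R.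
Proof.
have [mu_ge0 mu1] := mu_prob; set r := basis_rank _ A.
have -> : r%:R = \sum_S mu S * r%:R :> R by rewrite -mulr_suml mu1 mul1r.
apply: ler_sum => S _; have [->|mu_neq0] := eqVneq (mu S) 0; first by rewrite !mul0r.
by rewrite ler_wpM2l // ler_nat basis_rank_ge // inE lt_def mu_neq0 mu_ge0.
Qed.

Lemma marginal_rank_bound (k : nat) : (0 < k)%N ->
    (forall i, \sum_(S : {set 'I_n} | i \in S) mu S <= 1 / k%:R) ->
  forall A, (k * d <= k * basis_rank (mu_support mu) A + #|~: A|)%N.
Proof.
move=> k_gt0 marg A; have k_gt0R : 0 < k%:R :> R by rewrite ltr0n.
have : d%:R <= (basis_rank (mu_support mu) A)%:R + #|~: A|%:R / k%:R :> R.
  rewrite -expected_card (eq_bigr (fun S => mu S * #|S :&: A|%:R + mu S * #|S :\: A|%:R)).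
    rewrite big_split lerD ?expected_cardI_le // expected_cardD.
    apply: le_trans (ler_sum _ (fun x _ => marg x)) _.
    by rewrite sumr_const mul1r mulr_natl.
  by move=> S _; rewrite -mulrDr -natrD cardsID.
rewrite -(ler_pM2l k_gt0R) mulrDr mulrCA divff ?gt_eqF // mulr1 -!natrM -natrD.
by rewrite ler_nat.
Qed.
End ExpectedIntersection.

Lemma prob_support_neq0 (R : realType) (n : nat) (mu : {ffun {set 'I_n} -> R}) :
  prob_measure mu -> mu_support mu != set0.
Proof.
case=> mu_ge0 mu1; apply/set0Pn.
case: (pickP (fun S => 0 < mu S)) => [S mu_S|supp0]; first by exists S; rewrite inE.
move: mu1; rewrite big1 => [/esym/eqP|S _]; first by rewrite oner_eq0.
by apply/eqP; rewrite eq_le mu_ge0 andbT leNgt supp0.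
Qed.

Theorem theorem8p2 (R : realType) (n k d : nat) (mu : {ffun {set 'I_n} -> R}) :
  (2 <= k)%N ->
  prob_measure mu -> strong_rayleigh mu -> constant_sum mu d ->
  (forall i : 'I_n,
     \sum_(S : {set 'I_n} | i \in S) mu S
       <= (1 / Num.sqrt (k.-1)%:R - 1 / Num.sqrt k%:R) ^+ 2) ->
  exists F : 'I_k -> {set 'I_n},
    (forall a, F a \in mu_support mu) /\
    (forall a b, a != b -> [disjoint F a & F b]).
Proof.
move=> k_ge2 mu_prob SR mu_cs marg; have [mu_ge0 _] := mu_prob.
have exS := strong_rayleigh_exchange mu_ge0 SR mu_cs.
apply: (@base_packing _ _ d) (prob_support_neq0 mu_prob) exS _ _.
  by move=> B; rewrite inE => /gt_eqF/negbT/(mu_cs B).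
apply: (marginal_rank_bound mu_prob mu_cs) => [|i]; first lia.
exact: le_trans (marg i) (sqr_inv_sqrt_gap_le R k_ge2).
Qed.
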